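(* For every integer $n\ge 2$, $d_{n+1}+1 < (d_n+1)^2$.
   Context: A delta-matroid $(E,\mathcal F)$ consists of a finite ground set $E$ and a non-empty collection $\mathcal F$ of subsets of $E$ (the feasible sets) satisfying the symmetric exchange axiom: for all $X,Y\in\mathcal F$ and every $e\in X\triangle Y$ there exists $f\in X\triangle Y$ (possibly $f=e$) with $X\triangle\{e,f\}\in\mathcal F$. Let $d_n$ denote the number of labelled delta-matroids with ground set $[n]=\{1,\dots,n\}$, i.e. the number of collections $\mathcal F$ of subsets of $[n]$ such that $([n],\mathcal F)$ is a delta-matroid. *)

From mathcomp Require Import all_boot.
Set Implicit Arguments. Unset Strict Implicit. Unset Printing Implicit Defensive.

Definition symdiff (T : finType) (A B : {set T}) : {set T} :=
  (A :\: B) :|: (B :\: A).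

(* A delta-matroid on ground set T: F nonempty and the symmetric exchange
   axiom: for X, Y in F and e in X Δ Y there is f in X Δ Y (possibly f = e)
   with X Δ {e,f} in F. *)
Definition is_delta_matroid (T : finType) (F : {set {set T}}) : bool :=
  (F != set0) &&
  [forall X in F, forall Y in F, forall e in symdiff X Y,
     exists f in symdiff X Y, symdiff X [set e; f] \in F].

Definition d (n : nat) : nat :=
  #|[set F : {set {set 'I_n}} | is_delta_matroid F]|.

From mathcomp Require Import all_boot.
From mathcomp Require Import zify.
Set Implicit Arguments. Unset Strict Implicit. Unset Printing Implicit Defensive.

(** Write the ground set [n+1] as [n] plus a last element [e].  A family [F]
   on [n+1] is determined by its two slices: the deletion (sets of [F] avoiding
   [e]) and the contraction (sets of [F] containing [e], with [e] removed).
   Each slice of a delta-matroid is empty or again a delta-matroid, so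
   delta-matroids on [n+1] inject into pairs of "empty or delta-matroid"
   families on [n], of which there are [(d_n + 1)^2].  The pairs (empty, empty)
   and ({∅}, {[n]}) are the slices of the empty family and of {∅, [n+1]}, and
   neither is a delta-matroid when n >= 2; hence d_{n+1} <= (d_n + 1)^2 - 2. *)

Lemma in_symdiff (T : finType) (A B : {set T}) x :
  (x \in symdiff A B) = ((x \in A) != (x \in B)).
Proof. by rewrite /symdiff !inE; do 2 case: (_ \in _). Qed.

Lemma delta_matroid_set1 (T : finType) (X : {set T}) : is_delta_matroid [set X].
Proof.
apply/andP; split; first by apply/set0Pn; exists X; rewrite inE.
apply/forall_inP => _ /set1P ->; apply/forall_inP => _ /set1P ->.
by apply/forall_inP => e; rewrite in_symdiff eqxx.
Qed.

Lemma not_delta_matroid_set0 (T : finType) : ~~ is_delta_matroid (set0 : {set {set T}}).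
Proof. by rewrite /is_delta_matroid eqxx. Qed.

(* Exchanging from [set0] towards [setT] would need a set of size at most 2 in
   the family, but its only nonempty member is [setT]. *)
Lemma not_delta_matroid_set0T (T : finType) :
  2 < #|T| -> ~~ is_delta_matroid [set set0; setT : {set T}].
Proof.
move=> T_gt2; apply/negP => /andP[_ /forall_inP exchange].
have /card_gt0P [e _] : 0 < #|T| by lia.
have /forall_inP /(_ setT (set22 _ _)) /forall_inP /(_ e) := exchange set0 (set21 _ _).
have sym0 (A : {set T}) : symdiff set0 A = A by rewrite /symdiff set0D setD0 set0U.
rewrite sym0 inE => /(_ isT) /exists_inP [f _].
rewrite sym0 !inE => /orP[/eqP/setP/(_ e) | /eqP ef_T]; first by rewrite !inE eqxx.
by move: (cards2 e f); rewrite ef_T cardsT; case: (e == f); lia.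
Qed.

Lemma card_delta_matroid_or0 n :
  #|[set F : {set {set 'I_n}} | (F == set0) || is_delta_matroid F]| = d n + 1.
Proof.
have -> : [set F : {set {set 'I_n}} | (F == set0) || is_delta_matroid F]
          = set0 |: [set F | is_delta_matroid F] by apply/setP => F; rewrite !inE.
by rewrite cardsU1 inE (negbTE (not_delta_matroid_set0 _)) addnC.
Qed.

Section Slices.

Variable n : nat.

Definition extend (b : bool) (X : {set 'I_n}) : {set 'I_n.+1} :=
  if b then ord_max |: (lift ord_max @: X) else lift ord_max @: X.

Definition restrict (Y : {set 'I_n.+1}) : {set 'I_n} := [set j | lift ord_max j \in Y].

(* [slice false F] is the deletion and [slice true F] the contraction of [F]
   by the last element [ord_max]. *)
Definition slice (b : bool) (F : {set {set 'I_n.+1}}) : {set {set 'I_n}} :=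
  [set X | extend b X \in F].

Lemma mem_extend_lift b (X : {set 'I_n}) j : (lift ord_max j \in extend b X) = (j \in X).
Proof.
have lift_mem : (lift ord_max j \in lift ord_max @: X) = (j \in X).
  by apply: mem_imset; exact: lift_inj.
by rewrite /extend; case: b; rewrite ?in_setU1 lift_mem // eq_sym (negbTE (neq_lift _ _)).
Qed.

Lemma mem_extend_max b (X : {set 'I_n}) : (ord_max \in extend b X) = b.
Proof.
rewrite /extend; case: b; rewrite ?setU11 //.
by apply/imsetP => -[j _ /eqP]; rewrite (negbTE (neq_lift _ _)).
Qed.

Lemma extend_restrict (Y : {set 'I_n.+1}) : extend (ord_max \in Y) (restrict Y) = Y.
Proof.
apply/setP => i; case: (unliftP ord_max i) => [j ->|->].
  by rewrite mem_extend_lift inE.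
by rewrite mem_extend_max.
Qed.

Lemma restrict_extend b (X : {set 'I_n}) : restrict (extend b X) = X.
Proof. by apply/setP => j; rewrite inE mem_extend_lift. Qed.

Lemma eq_extend b c (X Y : {set 'I_n}) : (extend b X == extend c Y) = (b == c) && (X == Y).
Proof.
apply/eqP/andP => [eXY | [/eqP-> /eqP->] //].
have := congr1 (fun Z : {set 'I_n.+1} => (ord_max \in Z, restrict Z)) eXY.
by rewrite /= !mem_extend_max !restrict_extend => -[-> ->].
Qed.

Lemma symdiff_extend b (X Y : {set 'I_n}) :
  symdiff (extend b X) (extend b Y) = lift ord_max @: symdiff X Y.
Proof.
apply/setP => i; case: (unliftP ord_max i) => [j ->|->]; rewrite in_symdiff.
  by rewrite !mem_extend_lift mem_imset ?in_symdiff //; exact: lift_inj.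
by rewrite !mem_extend_max eqxx; symmetry; exact: (mem_extend_max false).
Qed.

Lemma symdiff_extend_pair b (X : {set 'I_n}) e f :
  symdiff (extend b X) [set lift ord_max e; lift ord_max f]
  = extend b (symdiff X [set e; f]).
Proof.
apply/setP => i; case: (unliftP ord_max i) => [j ->|->]; rewrite in_symdiff.
  by rewrite !mem_extend_lift in_symdiff !inE !(inj_eq (@lift_inj _ ord_max)).
by rewrite !mem_extend_max !inE !(negbTE (neq_lift _ _)); case: b.
Qed.

Lemma slice_inj (F G : {set {set 'I_n.+1}}) :
  slice false F = slice false G -> slice true F = slice true G -> F = G.
Proof.
move=> eq0 eq1; apply/setP => Y; rewrite -(extend_restrict Y).
have /setP/(_ (restrict Y)) : slice (ord_max \in Y) F = slice (ord_max \in Y) G.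
  by case: (ord_max \in Y).
by rewrite !inE.
Qed.

Lemma slice_delta_matroid b (F : {set {set 'I_n.+1}}) :
  is_delta_matroid F -> slice b F != set0 -> is_delta_matroid (slice b F).
Proof.
move=> /andP[_ /forall_inP exchange] slice_n0; apply/andP; split=> //.
apply/forall_inP => X; rewrite inE => FX; apply/forall_inP => Y; rewrite inE => FY.
apply/forall_inP => e XYe.
have /forall_inP /(_ _ FY) /forall_inP /(_ (lift ord_max e)) := exchange _ FX.
rewrite symdiff_extend mem_imset; last exact: lift_inj.
move=> /(_ XYe) /exists_inP [_ /imsetP [f XYf ->] FZ].
by apply/exists_inP; exists f; rewrite // inE -symdiff_extend_pair.
Qed.

Lemma slice_delta_matroid_or0 b (F : {set {set 'I_n.+1}}) :
  (F == set0) || is_delta_matroid F ->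
  (slice b F == set0) || is_delta_matroid (slice b F).
Proof.
case/orP => [/eqP-> | dmF].
  by apply/orP; left; apply/eqP/setP => X; rewrite !inE.
by case: eqP => [//|/eqP slice_n0]; rewrite slice_delta_matroid.
Qed.

Lemma slice_set0T b : slice b [set set0; setT] = [set if b then setT else set0].
Proof.
have ext0 : extend false set0 = set0 by rewrite /extend imset0.
have extT : extend true setT = setT.
  by rewrite -(extend_restrict setT) in_setT; congr extend; apply/setP => j; rewrite !inE.
apply/setP => X; rewrite !inE -{1}ext0 -{1}extT !eq_extend.
by case: b; rewrite /= ?orbF.
Qed.

End Slices.

Lemma d_succ_add2_le n : 2 <= n -> d n.+1 + 2 <= (d n + 1) ^ 2.
Proof.
move=> n_ge2.
set E := [set F : {set {set 'I_n}} | (F == set0) || is_delta_matroid F].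
set F0T : {set {set 'I_n.+1}} := [set set0; setT].
set S := set0 |: (F0T |: [set F | is_delta_matroid F]).
pose slices (F : {set {set 'I_n.+1}}) := (slice false F, slice true F).
have slices_inj : injective slices by move=> F G [] /slice_inj; apply.
have F0T_n0 : F0T != set0 by apply/set0Pn; exists set0; rewrite !inE eqxx.
have F0T_ndm : ~~ is_delta_matroid F0T by apply: not_delta_matroid_set0T; rewrite card_ord.
have cardS : #|S| = d n.+1 + 2.
  rewrite /d cardsU1 cardsU1 !inE F0T_ndm (negbTE (not_delta_matroid_set0 _)).
  by rewrite eq_sym (negbTE F0T_n0) /=; lia.
have : slices @: S \subset setX E E.
  apply/subsetP => _ /imsetP [F SF ->]; rewrite in_setX !inE /=.
  move: SF; rewrite !inE => /or3P [/eqP-> | /eqP-> | dmF].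
  - by rewrite !slice_delta_matroid_or0 ?eqxx.
  - by rewrite !slice_set0T !delta_matroid_set1 !orbT.
  - by rewrite !slice_delta_matroid_or0 ?dmF ?orbT.
move=> /subset_leq_card; rewrite card_imset // cardsX card_delta_matroid_or0 cardS.
by rewrite addn2 -mulnn.
Qed.

Theorem mainTheorem8 (n : nat) (hn : 2 <= n) :
  d n.+1 + 1 < (d n + 1) ^ 2.
Proof. by have := d_succ_add2_le hn; lia. Qed.
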